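(* Let $q$ be a prime power with $q\equiv 1\pmod 4$ and $5\mid(q-1)$, and let $n=1+\frac{q-1}{5}$. Then $C_5+C_n:=\{\alpha+\beta:\alpha\in C_5,\beta\in C_n\}\neq\mathbb{F}_q$. In fact, $|C_5+C_n|\le q-1$.
   Context: For a prime power $q$ and an integer $k>1$, an element $a\in\mathbb{F}_q$ is called a $k$-potent if $a^k=a$, and $C_k$ denotes the set of all $k$-potents in $\mathbb{F}_q$. *)

From HB Require Import structures.
From mathcomp Require Import all_boot all_order all_algebra all_field.
Set Implicit Arguments. Unset Strict Implicit. Unset Printing Implicit Defensive.
Import GRing.Theory.
Local Open Scope ring_scope.

Definition kpotents (F : finFieldType) (k : nat) : {set F} :=
  [set a : F | a ^+ k == a].

Definition sumset (F : finFieldType) (A B : {set F}) : {set F} :=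
  [set a + b | a in A, b in B].

(** Write m = (q - 1)/5; as q = 1 + 5m and 4 | q - 1, also 4 | m, so C_5 \ {0}
    (the fourth roots of unity) lies in C_n = {0} ∪ {b : b^m = 1}.  A sum
    a + b with a ∈ C_5, b ∈ C_n is then either in C_n (when a, b or a + b is 0)
    or equals a(1 - c) with a^4 = 1 and c = -b/a an m-th root of unity
    different from 1 (here the evenness of m is used).  Counting,
    |C_5 + C_n| <= (m + 1) + 4(m - 1) < 5m = q - 1. *)
From HB Require Import structures.
From mathcomp Require Import all_boot all_order all_algebra all_field.
From mathcomp Require Import zify ring.
Set Implicit Arguments.
Unset Strict Implicit.
Unset Printing Implicit Defensive.

Import GRing.Theory.
Local Open Scope ring_scope.

Section KPotents.

Variable F : finFieldType.

Lemma kpotentsS_unitE (k : nat) (b : F) :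
  b != 0 -> (b \in kpotents F k.+1) = (b ^+ k == 1).
Proof.
move=> b0; rewrite inE exprS.
by apply/eqP/eqP => [bk|->]; [apply: (mulfI b0); rewrite mulr1 | rewrite mulr1].
Qed.

Lemma card_unity_roots_le (A : {set F}) (k : nat) :
  (0 < k)%N -> {in A, forall x, x ^+ k = 1} -> (#|A| <= k)%N.
Proof.
move=> k_gt0 Ak; rewrite cardE; apply: max_unity_roots => //; last exact: enum_uniq.
by apply/allP => x; rewrite mem_enum unity_rootE => /Ak ->.
Qed.

Lemma card_kpotentsS_D0 (k : nat) :
  (0 < k)%N -> (#|kpotents F k.+1 :\ 0%R| <= k)%N.
Proof.
move=> k_gt0; apply: card_unity_roots_le => // x.
by rewrite in_setD1 => /andP[x0]; rewrite kpotentsS_unitE // => /eqP.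
Qed.

Lemma card_kpotentsS (k : nat) : (0 < k)%N -> (#|kpotents F k.+1| <= k.+1)%N.
Proof.
move=> /card_kpotentsS_D0 card_D0; rewrite (cardsD1 (0 : F)).
exact: leq_add (leq_b1 _) card_D0.
Qed.

Lemma card_kpotentsS_D01 (k : nat) :
  (0 < k)%N -> (#|kpotents F k.+1 :\ 0%R :\ 1%R| <= k.-1)%N.
Proof.
move=> /card_kpotentsS_D0; rewrite (cardsD1 (1 : F)) in_setD1 oner_neq0.
rewrite kpotentsS_unitE ?oner_neq0 // expr1n eqxx add1n => card_D01.
by rewrite -ltnS (leq_trans card_D01 (leqSpred k)).
Qed.

Variables d m : nat.
Hypotheses (d_dvd_m : (d %| m)%N) (m_even : ~~ odd m).

Let C := kpotents F d.+1.
Let D := kpotents F m.+1.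

Lemma kpotentsS_dvd_pow (a : F) : a \in C :\ 0 -> a ^+ m = 1.
Proof.
rewrite in_setD1 => /andP[a0]; rewrite kpotentsS_unitE // => /eqP ad.
by rewrite -(divnK d_dvd_m) mulnC exprM ad expr1n.
Qed.

Lemma sumset_kpotentsS_sub :
  sumset C D \subset D :|: [set a * (1 - c) | a in C :\ 0, c in D :\ 0 :\ 1].
Proof.
apply/subsetP => _ /imset2P[a b aC bD ->]; rewrite in_setU.
have [->|a0] := eqVneq a 0; first by rewrite add0r bD.
have aC0 : a \in C :\ 0 by rewrite in_setD1 a0.
have [->|b0] := eqVneq b 0.
  by rewrite addr0 kpotentsS_unitE // (kpotentsS_dvd_pow aC0) eqxx.
have [->|ab0] := eqVneq (a + b) 0; first by rewrite inE expr0n eqxx.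
apply/orP; right; apply/imset2P; exists a (- b / a) => //; last by field.
have bm : b ^+ m = 1 by apply/eqP; rewrite -kpotentsS_unitE.
have c0 : - b / a != 0 by rewrite mulf_neq0 ?oppr_eq0 ?invr_eq0.
rewrite !in_setD1 c0 andTb kpotentsS_unitE //.
rewrite expr_div_n exprNn bm (kpotentsS_dvd_pow aC0) divr1 mulr1.
rewrite -signr_odd (negbTE m_even) expr0 eqxx andbT.
by apply: contra ab0 => /eqP/(canRL (divfK a0)); rewrite mul1r => <-; rewrite addNr.
Qed.

Lemma card_sumset_kpotentsS :
  (0 < d)%N -> (0 < m)%N -> (#|sumset C D| <= m.+1 + d * m.-1)%N.
Proof.
move=> d_gt0 m_gt0.
apply: leq_trans (subset_leq_card sumset_kpotentsS_sub) _.
apply: leq_trans (leq_card_setU _ _) _; apply: leq_add; first exact: card_kpotentsS.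
rewrite curry_imset2X; apply: leq_trans (leq_imset_card _ _) _.
by rewrite cardsX leq_mul ?card_kpotentsS_D0 ?card_kpotentsS_D01.
Qed.

End KPotents.

Local Close Scope ring_scope.

Theorem mainTheorem4 (F : finFieldType) :
  #|F| %% 4 = 1 -> 5 %| (#|F| - 1) ->
  let n := 1 + (#|F| - 1) %/ 5 in
  sumset (kpotents F 5) (kpotents F n) != [set: F] /\
  #|sumset (kpotents F 5) (kpotents F n)| <= #|F| - 1.
Proof.
move=> q_mod4 q_mod5 n; set m := (#|F| - 1) %/ 5.
have q_gt1 : 1 < #|F| := finNzRing_gt1 F.
have qE : #|F| - 1 = 5 * m by rewrite /m mulnC divnK.
have m4 : 4 %| m by lia.
have m_even : ~~ odd m by rewrite -dvdn2 (dvdn_trans _ m4).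
have m_gt0 : 0 < m by lia.
have card_le : #|sumset (kpotents F 5) (kpotents F n)| <= #|F| - 1.
  rewrite /n add1n; apply: leq_trans (card_sumset_kpotentsS F m4 m_even isT m_gt0) _.
  lia.
split=> //; apply: contraTneq card_le => ->.
by rewrite cardsT -ltnNge ltn_subrL (ltnW q_gt1).
Qed.
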